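(* For $i=1,2$ let $\alpha_i\in[-1,1]$ and let $f_{\alpha_i}=h_{\alpha_i}+\overline{g_{\alpha_i}}\in S_H$ with $h_{\alpha_i}(z)+g_{\alpha_i}(z)=\dfrac{z(1-\alpha_i z)}{1-z^2}$ for $z\in E$. Let $0\le t\le 1$ and $f=tf_{\alpha_1}+(1-t)f_{\alpha_2}$. If $f$ is locally univalent and sense-preserving in $E$, then $f\in S_H$ and $f$ maps $E$ onto a domain convex in the direction of the imaginary axis.
   Context: $E=\{z\in\mathbb{C}:|z|<1\}$. A harmonic mapping $f=h+\overline{g}$ on $E$ (with $h,g$ analytic) is locally univalent and sense-preserving iff $h'\neq0$ in $E$ and its dilatation $\omega=g'/h'$ satisfies $|\omega|<1$ in $E$. $S_H$ denotes the class of harmonic, univalent, sense-preserving mappings $f=h+\overline{g}$ of $E$ normalized by $f(0)=0$, $f_z(0)=1$. A domain $\Omega$ is convex in the direction of the imaginary axis if every line parallel to the imaginary axis has connected or empty intersection with $\Omega$. *)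

From Stdlib Require Import Reals Lra.
Open Scope R_scope.

Definition Cplx : Type := (R * R)%type.
Definition RtoC (x : R) : Cplx := (x, 0).
Definition C0 : Cplx := (0, 0).
Definition C1 : Cplx := (1, 0).
Definition Cadd (z w : Cplx) : Cplx := (fst z + fst w, snd z + snd w).
Definition Copp (z : Cplx) : Cplx := (- fst z, - snd z).
Definition Csub (z w : Cplx) : Cplx := Cadd z (Copp w).
Definition Cmul (z w : Cplx) : Cplx :=
  (fst z * fst w - snd z * snd w, fst z * snd w + snd z * fst w).
Definition Cinv (z : Cplx) : Cplx :=
  (fst z / (fst z ^ 2 + snd z ^ 2), - snd z / (fst z ^ 2 + snd z ^ 2)).
Definition Cdiv (z w : Cplx) : Cplx := Cmul z (Cinv w).
Definition Cconj (z : Cplx) : Cplx := (fst z, - snd z).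
Definition Cnorm (z : Cplx) : R := sqrt (fst z ^ 2 + snd z ^ 2).

Definition inE (z : Cplx) : Prop := Cnorm z < 1.

Definition cderiv_at (f : Cplx -> Cplx) (z l : Cplx) : Prop :=
  forall eps, 0 < eps -> exists delta, 0 < delta /\
    forall w, Cnorm (Csub w z) < delta ->
      Cnorm (Csub (Csub (f w) (f z)) (Cmul l (Csub w z))) <= eps * Cnorm (Csub w z).

Definition analytic_on_E (f : Cplx -> Cplx) : Prop :=
  forall z, inE z -> exists l, cderiv_at f z l.

Definition harm (h g : Cplx -> Cplx) : Cplx -> Cplx := fun z => Cadd (h z) (Cconj (g z)).

Definition loc_univ_sense_pres (h g : Cplx -> Cplx) : Prop :=
  forall z, inE z -> forall a b, cderiv_at h z a -> cderiv_at g z b ->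
    a <> C0 /\ Cnorm (Cdiv b a) < 1.

Definition in_SH (h g : Cplx -> Cplx) : Prop :=
  analytic_on_E h /\ analytic_on_E g /\
  (forall z w, inE z -> inE w -> harm h g z = harm h g w -> z = w) /\
  loc_univ_sense_pres h g /\
  harm h g C0 = C0 /\
  cderiv_at h C0 C1.

Definition imageE (f : Cplx -> Cplx) (w : Cplx) : Prop := exists z, inE z /\ f z = w.

Definition open_set (S : Cplx -> Prop) : Prop :=
  forall w, S w -> exists r, 0 < r /\ forall v, Cnorm (Csub v w) < r -> S v.

Definition connected_set (S : Cplx -> Prop) : Prop :=
  forall U V : Cplx -> Prop, open_set U -> open_set V ->
    (forall w, S w -> U w \/ V w) ->
    (exists w, S w /\ U w) -> (exists w, S w /\ V w) ->
    exists w, S w /\ U w /\ V w.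

Definition domain (S : Cplx -> Prop) : Prop :=
  open_set S /\ connected_set S /\ exists w, S w.

Definition convex_imag_dir (S : Cplx -> Prop) : Prop :=
  forall x y1 y2 y, S (x, y1) -> S (x, y2) -> y1 <= y -> y <= y2 -> S (x, y).

Definition lincomb (t : R) (f1 f2 : Cplx -> Cplx) : Cplx -> Cplx :=
  fun z => Cadd (Cmul (RtoC t) (f1 z)) (Cmul (RtoC (1 - t)) (f2 z)).

Definition shear_target (alpha : R) (z : Cplx) : Cplx :=
  Cdiv (Cmul z (Csub C1 (Cmul (RtoC alpha) z))) (Csub C1 (Cmul z z)).

(** Let  φ_α(z) = z(1 - αz)/(1 - z²)  and let  f = h + conj g  with
    h + g = t φ_{α1} + (1-t) φ_{α2}.  Since φ_α is affine in α, h + g = φ_a with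
    a = tα1 + (1-t)α2 ∈ [-1,1], so  Re f = Re φ_a  (a shear of φ_a).

    The proof studies the level sets of Re φ_a.  In the Cayley coordinate
    w = (1+z)/(1-z), which maps E onto the right half-plane, write w = p(1 + iτ)
    with p > 0; then Re φ_a = x becomes a quadratic equation in p with at most one
    positive root p_x(τ).  Hence every nonempty level set is a single curve
    γ_x(τ), τ ∈ ℝ.  Along γ_x we have Re((h'+g')γ') = 0 and, by an explicit
    computation, Im((h'+g')γ') > 0; together with |g'| < |h'| this gives
    d/dτ Im f(γ_x(τ)) = Im(h'γ' - g'γ') > 0.  Strict monotonicity of Im f along
    the level curves then yields univalence and convexity in the direction of the
    imaginary axis (intermediate value theorem), and, since γ_x depends
    continuously on x, openness of f(E); connectedness follows from the
    continuity of f along radial segments. *)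

From Pilot Require Import Defs.
From Stdlib Require Import Reals Lra FunctionalExtensionality Classical.
From Coquelicot Require Import Coquelicot.
(* Re-import so that the names of Defs take precedence over Coquelicot's namesakes. *)
Import Pilot.Defs.
Open Scope R_scope.

Ltac cplx_ring :=
  unfold Csub, Cadd, Cmul, Copp, Cconj, Cdiv, Cinv, RtoC, C0, C1;
  apply injective_projections; simpl; ring.

Ltac cplx_field :=
  unfold Csub, Cadd, Cmul, Copp, Cconj, Cdiv, Cinv, RtoC, C0, C1;
  apply injective_projections; simpl; field.

(** ** The modulus.  [Cplx] and [Cnorm] coincide with Coquelicot's [C] and [Cmod]. *)

Lemma Cnorm_add_le x y : Cnorm (Cadd x y) <= Cnorm x + Cnorm y.
Proof. apply Cmod_triangle. Qed.

Lemma Cnorm_mul x y : Cnorm (Cmul x y) = Cnorm x * Cnorm y.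
Proof. apply Cmod_mult. Qed.

Lemma Cnorm_ge0 x : 0 <= Cnorm x.
Proof. apply Cmod_ge_0. Qed.

Lemma Cnorm_conj x : Cnorm (Cconj x) = Cnorm x.
Proof. apply Cmod_conj. Qed.

Lemma Cnorm_RtoC x : Cnorm (RtoC x) = Rabs x.
Proof. apply Cmod_R. Qed.

Lemma Rabs_fst_le_Cnorm x : Rabs (fst x) <= Cnorm x.
Proof. apply re_le_Cmod. Qed.

Lemma Rabs_snd_le_Cnorm x : Rabs (snd x) <= Cnorm x.
Proof.
  pose proof (Rmax_Cmod x) as Hmax.
  pose proof (Rmax_r (Rabs (fst x)) (Rabs (snd x))).
  unfold Cnorm; unfold Cmod in Hmax; lra.
Qed.

Lemma Cnorm_le_abs_sum x : Cnorm x <= Rabs (fst x) + Rabs (snd x).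
Proof.
  pose proof (Rabs_pos (fst x)); pose proof (Rabs_pos (snd x)).
  unfold Cnorm. rewrite <- (sqrt_Rsqr (Rabs (fst x) + Rabs (snd x))) by lra.
  apply sqrt_le_1_alt. rewrite <- (pow2_abs (fst x)), <- (pow2_abs (snd x)).
  unfold Rsqr. nra.
Qed.

Lemma Cnorm_sqr z : Cnorm z ^ 2 = fst z ^ 2 + snd z ^ 2.
Proof. unfold Cnorm. rewrite <- Rsqr_pow2, Rsqr_sqrt; [reflexivity | nra]. Qed.

Lemma inE_iff x y : inE (x, y) <-> x ^ 2 + y ^ 2 < 1.
Proof.
  unfold inE, Cnorm. cbn [fst snd]. split; intro H.
  - destruct (Rlt_or_le (x ^ 2 + y ^ 2) 1) as [Hlt | Hge]; auto.
    apply sqrt_le_1_alt in Hge. rewrite sqrt_1 in Hge. lra.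
  - rewrite <- sqrt_1. apply sqrt_lt_1_alt. split; [nra | lra].
Qed.

Lemma inE_origin : inE (0, 0).
Proof. apply inE_iff. lra. Qed.

Lemma inE_scale l z : 0 <= l <= 1 -> inE z -> inE (Cmul (RtoC l) z).
Proof.
  intros Hl Hz. unfold inE in *.
  rewrite Cnorm_mul, Cnorm_RtoC, Rabs_right by lra.
  pose proof (Cnorm_ge0 z). nra.
Qed.

Lemma cderiv_add f g z l1 l2 : cderiv_at f z l1 -> cderiv_at g z l2 ->
  cderiv_at (fun w => Cadd (f w) (g w)) z (Cadd l1 l2).
Proof.
  intros H1 H2 eps He.
  destruct (H1 (eps / 2)) as [d1 [Hd1 P1]]; [lra |].
  destruct (H2 (eps / 2)) as [d2 [Hd2 P2]]; [lra |].
  exists (Rmin d1 d2). split; [apply Rmin_pos; auto |]. intros w Hw.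
  replace (Csub (Csub (Cadd (f w) (g w)) (Cadd (f z) (g z))) (Cmul (Cadd l1 l2) (Csub w z)))
    with (Cadd (Csub (Csub (f w) (f z)) (Cmul l1 (Csub w z)))
               (Csub (Csub (g w) (g z)) (Cmul l2 (Csub w z)))) by cplx_ring.
  eapply Rle_trans; [apply Cnorm_add_le |].
  pose proof (P1 w (Rlt_le_trans _ _ _ Hw (Rmin_l _ _))).
  pose proof (P2 w (Rlt_le_trans _ _ _ Hw (Rmin_r _ _))). lra.
Qed.

Lemma cderiv_scale c f z l : cderiv_at f z l ->
  cderiv_at (fun w => Cmul c (f w)) z (Cmul c l).
Proof.
  intros H eps He. pose proof (Cnorm_ge0 c) as Hc.
  destruct (H (eps / (Cnorm c + 1))) as [d [Hd P]].
  { apply Rdiv_lt_0_compat; lra. }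
  exists d. split; auto. intros w Hw.
  replace (Csub (Csub (Cmul c (f w)) (Cmul c (f z))) (Cmul (Cmul c l) (Csub w z)))
    with (Cmul c (Csub (Csub (f w) (f z)) (Cmul l (Csub w z)))) by cplx_ring.
  rewrite Cnorm_mul. specialize (P w Hw). pose proof (Cnorm_ge0 (Csub w z)).
  assert (Hk : Cnorm c * (eps / (Cnorm c + 1)) <= eps).
  { apply Rmult_le_reg_r with (Cnorm c + 1); [lra |].
    field_simplify; [nra | lra]. }
  apply Rle_trans with (Cnorm c * (eps / (Cnorm c + 1) * Cnorm (Csub w z))); [|nra].
  apply Rmult_le_compat_l; auto.
Qed.

Lemma cderiv_continuous f z l : cderiv_at f z l ->
  forall eps, 0 < eps -> exists d, 0 < d /\
    forall w, Cnorm (Csub w z) < d -> Cnorm (Csub (f w) (f z)) < eps.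
Proof.
  intros H eps He. destruct (H 1) as [d1 [Hd1 P1]]; [lra |].
  pose proof (Cnorm_ge0 l) as Hl.
  exists (Rmin d1 (eps / (Cnorm l + 1))).
  split; [apply Rmin_pos; [auto | apply Rdiv_lt_0_compat; lra] |].
  intros w Hw. pose proof (P1 w (Rlt_le_trans _ _ _ Hw (Rmin_l _ _))).
  assert (Hwz : Cnorm (Csub w z) * (Cnorm l + 1) < eps).
  { apply (Rmult_lt_reg_r (/ (Cnorm l + 1))); [apply Rinv_0_lt_compat; lra |].
    rewrite Rmult_assoc, Rinv_r by lra.
    pose proof (Rlt_le_trans _ _ _ Hw (Rmin_r _ _)). unfold Rdiv in *. lra. }
  replace (Csub (f w) (f z))
    with (Cadd (Csub (Csub (f w) (f z)) (Cmul l (Csub w z))) (Cmul l (Csub w z))) by cplx_ring.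
  eapply Rle_lt_trans; [apply Cnorm_add_le |]. rewrite Cnorm_mul.
  pose proof (Cnorm_ge0 (Csub w z)). nra.
Qed.

Lemma lincomb_cderiv t f1 f2 z l1 l2 : cderiv_at f1 z l1 -> cderiv_at f2 z l2 ->
  cderiv_at (lincomb t f1 f2) z (Cadd (Cmul (RtoC t) l1) (Cmul (RtoC (1 - t)) l2)).
Proof.
  intros H1 H2.
  apply (cderiv_add (fun w => Cmul (RtoC t) (f1 w)) (fun w => Cmul (RtoC (1 - t)) (f2 w)));
    apply cderiv_scale; auto.
Qed.

Lemma lincomb_analytic t f1 f2 :
  analytic_on_E f1 -> analytic_on_E f2 -> analytic_on_E (lincomb t f1 f2).
Proof.
  intros H1 H2 z Hz. destruct (H1 z Hz) as [l1 P1]. destruct (H2 z Hz) as [l2 P2].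
  eexists. apply lincomb_cderiv; eauto.
Qed.

Lemma harm_continuous h g : analytic_on_E h -> analytic_on_E g ->
  forall z0, inE z0 -> forall eps, 0 < eps -> exists d, 0 < d /\
    forall w, Cnorm (Csub w z0) < d -> Cnorm (Csub (harm h g w) (harm h g z0)) < eps.
Proof.
  intros Hh Hg z0 Hz eps He.
  destruct (Hh _ Hz) as [lh Hlh]. destruct (Hg _ Hz) as [lg Hlg].
  destruct (cderiv_continuous _ _ _ Hlh (eps / 2)) as [d1 [Hd1 P1]]; [lra |].
  destruct (cderiv_continuous _ _ _ Hlg (eps / 2)) as [d2 [Hd2 P2]]; [lra |].
  exists (Rmin d1 d2). split; [apply Rmin_pos; auto |]. intros w Hw.
  replace (Csub (harm h g w) (harm h g z0))
    with (Cadd (Csub (h w) (h z0)) (Cconj (Csub (g w) (g z0)))) by (unfold harm; cplx_ring).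
  eapply Rle_lt_trans; [apply Cnorm_add_le |]. rewrite Cnorm_conj.
  pose proof (P1 w (Rlt_le_trans _ _ _ Hw (Rmin_l _ _))).
  pose proof (P2 w (Rlt_le_trans _ _ _ Hw (Rmin_r _ _))). lra.
Qed.

(** ** Differentiation along real curves  τ ↦ (c1 τ, c2 τ) *)

Lemma curve_quotient_close (c1 c2 : R -> R) t0 d1 d2 :
  derivable_pt_lim c1 t0 d1 -> derivable_pt_lim c2 t0 d2 ->
  forall e, 0 < e -> exists del : posreal, forall tau, tau <> 0 -> Rabs tau < del ->
    Cnorm (Csub (Cmul (RtoC (/ tau)) (Csub (c1 (t0 + tau), c2 (t0 + tau)) (c1 t0, c2 t0)))
                (d1, d2)) < e.
Proof.
  intros H1 H2 e He.
  destruct (H1 (e / 2)) as [del1 P1]; [lra |]. destruct (H2 (e / 2)) as [del2 P2]; [lra |].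
  exists (mkposreal _ (Rmin_pos _ _ (cond_pos del1) (cond_pos del2))). simpl.
  intros tau Ht Hta.
  specialize (P1 tau Ht (Rlt_le_trans _ _ _ Hta (Rmin_l _ _))).
  specialize (P2 tau Ht (Rlt_le_trans _ _ _ Hta (Rmin_r _ _))).
  eapply Rle_lt_trans; [apply Cnorm_le_abs_sum |].
  unfold Csub, Cadd, Cmul, Copp, RtoC; simpl.
  match goal with |- Rabs ?u + Rabs ?v < _ =>
    replace u with ((c1 (t0 + tau) - c1 t0) / tau - d1) by (field; auto);
    replace v with ((c2 (t0 + tau) - c2 t0) / tau - d2) by (field; auto) end.
  lra.
Qed.

Lemma difference_quotient_bound (fz fz0 l dz d : Cplx) tau eta :
  tau <> 0 -> Cnorm (Csub (Csub fz fz0) (Cmul l dz)) <= eta * Cnorm dz ->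
  Cnorm (Csub (Cmul (RtoC (/ tau)) (Csub fz fz0)) (Cmul l d))
  <= eta * Cnorm (Cmul (RtoC (/ tau)) dz) + Cnorm l * Cnorm (Csub (Cmul (RtoC (/ tau)) dz) d).
Proof.
  intros Ht Hlin.
  replace (Csub (Cmul (RtoC (/ tau)) (Csub fz fz0)) (Cmul l d))
    with (Cadd (Cmul (RtoC (/ tau)) (Csub (Csub fz fz0) (Cmul l dz)))
               (Cmul l (Csub (Cmul (RtoC (/ tau)) dz) d))) by cplx_ring.
  eapply Rle_trans; [apply Cnorm_add_le |]. rewrite !Cnorm_mul, Cnorm_RtoC.
  apply Rplus_le_compat_r.
  replace (eta * (Rabs (/ tau) * Cnorm dz)) with (Rabs (/ tau) * (eta * Cnorm dz)) by ring.
  apply Rmult_le_compat_l; [apply Rabs_pos | exact Hlin].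
Qed.

Lemma cderiv_along_curve (f : Cplx -> Cplx) (c1 c2 : R -> R) t0 l d1 d2 :
  cderiv_at f (c1 t0, c2 t0) l -> derivable_pt_lim c1 t0 d1 -> derivable_pt_lim c2 t0 d2 ->
  forall eps, 0 < eps -> exists del : posreal, forall tau, tau <> 0 -> Rabs tau < del ->
    Cnorm (Csub (Cmul (RtoC (/ tau)) (Csub (f (c1 (t0 + tau), c2 (t0 + tau))) (f (c1 t0, c2 t0))))
                (Cmul l (d1, d2))) < eps.
Proof.
  intros Hf H1 H2 eps He.
  set (d := (d1, d2) : Cplx).
  pose proof (Cnorm_ge0 d) as Hd. pose proof (Cnorm_ge0 l) as Hl.
  set (eta := eps / (2 * (Cnorm d + 1))).
  set (e := Rmin 1 (eps / (2 * (Cnorm l + 1)))).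
  assert (Heta : 0 < eta) by (apply Rdiv_lt_0_compat; lra).
  assert (He0 : 0 < e) by (apply Rmin_pos; [lra | apply Rdiv_lt_0_compat; lra]).
  assert (He1 : e <= 1) by apply Rmin_l.
  assert (Hel : (Cnorm l + 1) * e <= eps / 2).
  { apply Rle_trans with ((Cnorm l + 1) * (eps / (2 * (Cnorm l + 1)))).
    - apply Rmult_le_compat_l; [lra | apply Rmin_r].
    - right. field. lra. }
  assert (Hetad : eta * (Cnorm d + 1) = eps / 2) by (unfold eta; field; lra).
  destruct (Hf eta Heta) as [dh [Hdh Pf]].
  destruct (curve_quotient_close c1 c2 t0 d1 d2 H1 H2 e He0) as [del Pq].
  assert (Hdh' : 0 < dh / (Cnorm d + 1)) by (apply Rdiv_lt_0_compat; lra).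
  exists (mkposreal _ (Rmin_pos _ _ (cond_pos del) Hdh')). simpl. intros tau Ht Hta.
  set (z0 := (c1 t0, c2 t0) : Cplx). set (z := (c1 (t0 + tau), c2 (t0 + tau)) : Cplx).
  set (q := Cmul (RtoC (/ tau)) (Csub z z0)).
  assert (Hq : Cnorm (Csub q d) < e) by exact (Pq tau Ht (Rlt_le_trans _ _ _ Hta (Rmin_l _ _))).
  assert (Hqn : Cnorm q <= Cnorm d + 1).
  { replace q with (Cadd d (Csub q d)) by (unfold q; cplx_ring).
    eapply Rle_trans; [apply Cnorm_add_le | lra]. }
  assert (Hzz : Cnorm (Csub z z0) < dh).
  { replace (Csub z z0) with (Cmul (RtoC tau) q) by (unfold q; cplx_field; auto).
    rewrite Cnorm_mul, Cnorm_RtoC.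
    apply Rle_lt_trans with (Rabs tau * (Cnorm d + 1)); [apply Rmult_le_compat_l; [apply Rabs_pos | lra] |].
    apply (Rmult_lt_reg_r (/ (Cnorm d + 1))); [apply Rinv_0_lt_compat; lra |].
    rewrite Rmult_assoc, Rinv_r by lra.
    pose proof (Rlt_le_trans _ _ _ Hta (Rmin_r _ _)). unfold Rdiv in *. lra. }
  eapply Rle_lt_trans; [exact (difference_quotient_bound _ _ l _ d tau eta Ht (Pf z Hzz)) |].
  change (eta * Cnorm q + Cnorm l * Cnorm (Csub q d) < eps). pose proof (Cnorm_ge0 q).
  assert (Cnorm l * Cnorm (Csub q d) <= Cnorm l * e) by (apply Rmult_le_compat_l; lra).
  assert (eta * Cnorm q <= eta * (Cnorm d + 1)) by (apply Rmult_le_compat_l; lra).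
  assert (Cnorm l * e < (Cnorm l + 1) * e) by (rewrite Rmult_plus_distr_r; lra).
  lra.
Qed.

Lemma re_along_curve (f : Cplx -> Cplx) (c1 c2 : R -> R) t0 l d1 d2 :
  cderiv_at f (c1 t0, c2 t0) l -> derivable_pt_lim c1 t0 d1 -> derivable_pt_lim c2 t0 d2 ->
  derivable_pt_lim (fun t => fst (f (c1 t, c2 t))) t0 (fst (Cmul l (d1, d2))).
Proof.
  intros Hf H1 H2 eps He.
  destruct (cderiv_along_curve f c1 c2 t0 l d1 d2 Hf H1 H2 eps He) as [del P].
  exists del. intros tau Ht Hta.
  eapply Rle_lt_trans; [| exact (P tau Ht Hta)].
  eapply Rle_trans; [| apply Rabs_fst_le_Cnorm].
  right. f_equal. unfold Csub, Cadd, Cmul, Copp, RtoC; simpl. field. auto.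
Qed.

Lemma im_along_curve (f : Cplx -> Cplx) (c1 c2 : R -> R) t0 l d1 d2 :
  cderiv_at f (c1 t0, c2 t0) l -> derivable_pt_lim c1 t0 d1 -> derivable_pt_lim c2 t0 d2 ->
  derivable_pt_lim (fun t => snd (f (c1 t, c2 t))) t0 (snd (Cmul l (d1, d2))).
Proof.
  intros Hf H1 H2 eps He.
  destruct (cderiv_along_curve f c1 c2 t0 l d1 d2 Hf H1 H2 eps He) as [del P].
  exists del. intros tau Ht Hta.
  eapply Rle_lt_trans; [| exact (P tau Ht Hta)].
  eapply Rle_trans; [| apply Rabs_snd_le_Cnorm].
  right. f_equal. unfold Csub, Cadd, Cmul, Copp, RtoC; simpl. field. auto.
Qed.

Lemma harm_im_along_curve h g (c1 c2 : R -> R) t0 lh lg d1 d2 :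
  cderiv_at h (c1 t0, c2 t0) lh -> cderiv_at g (c1 t0, c2 t0) lg ->
  derivable_pt_lim c1 t0 d1 -> derivable_pt_lim c2 t0 d2 ->
  derivable_pt_lim (fun t => snd (harm h g (c1 t, c2 t))) t0
    (snd (Cmul lh (d1, d2)) - snd (Cmul lg (d1, d2))).
Proof.
  intros Hh Hg H1 H2.
  exact (derivable_pt_lim_minus (fun t => snd (h (c1 t, c2 t))) (fun t => snd (g (c1 t, c2 t)))
           _ _ _ (im_along_curve h c1 c2 t0 lh d1 d2 Hh H1 H2)
           (im_along_curve g c1 c2 t0 lg d1 d2 Hg H1 H2)).
Qed.

(** ** The Cayley transform *)

Definition cayley (w : Cplx) : Cplx := Cdiv (Csub w C1) (Cadd w C1).
Definition cayley_inv (z : Cplx) : Cplx := Cdiv (Cadd C1 z) (Csub C1 z).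

Definition cayley_re (P Q : R) : R := (P ^ 2 + Q ^ 2 - 1) / ((P + 1) ^ 2 + Q ^ 2).
Definition cayley_im (P Q : R) : R := 2 * Q / ((P + 1) ^ 2 + Q ^ 2).

Lemma cayley_explicit P Q : 0 < P -> cayley (P, Q) = (cayley_re P Q, cayley_im P Q).
Proof. intros HP. unfold cayley, cayley_re, cayley_im. cplx_field; nra. Qed.

(** The right half-plane is mapped into E:  |w - 1| < |w + 1|  when Re w > 0. *)
Lemma cayley_inE P Q : 0 < P -> inE (cayley (P, Q)).
Proof.
  intros HP. rewrite cayley_explicit by auto. apply inE_iff. unfold cayley_re, cayley_im.
  assert (HD : 0 < (P + 1) ^ 2 + Q ^ 2) by nra.
  replace (((P ^ 2 + Q ^ 2 - 1) / ((P + 1) ^ 2 + Q ^ 2)) ^ 2 + (2 * Q / ((P + 1) ^ 2 + Q ^ 2)) ^ 2)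
    with (((P ^ 2 + Q ^ 2 - 1) ^ 2 + (2 * Q) ^ 2) / ((P + 1) ^ 2 + Q ^ 2) ^ 2) by (field; lra).
  apply Rlt_div_l; [nra |].
  (* ((P+1)² + Q²)² - ((P² + Q² - 1)² + 4Q²) = 8P² + 4P(P² + Q² + 1) > 0 *)
  assert (0 <= P ^ 2 + Q ^ 2) by nra. nra.
Qed.

Lemma cayley_inv_spec z : inE z -> 0 < fst (cayley_inv z) /\ cayley (cayley_inv z) = z.
Proof.
  destruct z as [x y]. intros H. apply inE_iff in H.
  assert (HD : 0 < (1 - x) ^ 2 + y ^ 2) by nra.
  assert (HW : cayley_inv (x, y) = ((1 - x ^ 2 - y ^ 2) / ((1 - x) ^ 2 + y ^ 2),
                                    2 * y / ((1 - x) ^ 2 + y ^ 2)))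
    by (unfold cayley_inv; cplx_field; nra).
  rewrite HW. cbn [fst].
  assert (HP : 0 < (1 - x ^ 2 - y ^ 2) / ((1 - x) ^ 2 + y ^ 2)) by (apply Rdiv_lt_0_compat; lra).
  split; auto. rewrite cayley_explicit by auto. unfold cayley_re, cayley_im.
  apply injective_projections; cbn [fst snd]; field; lra.
Qed.

Lemma shear_target_cayley_C (a : R) (w : C) : w <> 0%C -> (w + 1)%C <> 0%C ->
  ((w - 1) / (w + 1) * (1 - a * ((w - 1) / (w + 1))) /
   (1 - (w - 1) / (w + 1) * ((w - 1) / (w + 1))))%C
  = (((1 - a) / 2 * w - (1 + a) / 2 / w + a) / 2)%C.
Proof.
  intros H0 H1. field. split; [exact H0 | split; [exact H1 |]].
  replace ((w + 1) * (w + 1) - (w - 1) * (w - 1))%C with (4 * w)%C by ring.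
  intro H4. apply H0.
  assert (H4' : (4 : C) <> 0%C) by (intro E; apply (f_equal fst) in E; simpl in E; lra).
  replace w with (4 * w / 4)%C by (field; exact H4'). rewrite H4. field.
Qed.

Lemma shear_target_cayley a P Q : 0 < P ->
  shear_target a (cayley (P, Q)) =
  (((1 - a) / 2 * P - (1 + a) / 2 * P / (P ^ 2 + Q ^ 2) + a) / 2,
   ((1 - a) / 2 * Q + (1 + a) / 2 * Q / (P ^ 2 + Q ^ 2)) / 2).
Proof.
  intros HP.
  assert (H0 : ((P, Q) : C) <> 0%C) by (intro E; apply (f_equal fst) in E; simpl in E; lra).
  assert (H1 : (((P, Q) : C) + 1)%C <> 0%C) by (intro E; apply (f_equal fst) in E; simpl in E; lra).
  transitivity ((((1 - a) / 2 * ((P, Q) : C) - (1 + a) / 2 / ((P, Q) : C) + a) / 2)%C).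
  { exact (shear_target_cayley_C a (P, Q) H0 H1). }
  apply injective_projections; simpl; field; nra.
Qed.

(** ** Level curves of  Re φ_a

    Writing the Cayley coordinate as w = p(1 + iτ) with p > 0, the equation
    Re φ_a = x becomes  A p² - X p - B/(1+τ²) = 0  with  A = (1-a)/2,
    B = (1+a)/2  and  X = 2x - a.  For a ∈ [-1,1] it has at most one positive
    root [level_root a x τ], and it has one exactly when x is [admissible]. *)

Definition coefA (a : R) : R := (1 - a) / 2.
Definition coefB (a : R) : R := (1 + a) / 2.
Definition coefX (a x : R) : R := 2 * x - a.

Definition level_eq (a x p t : R) : Prop :=
  coefA a * p ^ 2 - coefX a x * p - coefB a / (1 + t ^ 2) = 0.

Definition level_disc (a x t : R) : R := coefX a x ^ 2 + 4 * coefA a * coefB a / (1 + t ^ 2).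

Definition level_root (a x t : R) : R :=
  if Req_EM_T (coefA a) 0 then -1 / (coefX a x * (1 + t ^ 2))
  else (coefX a x + sqrt (level_disc a x t)) / (2 * coefA a).

Definition admissible (a x : R) : Prop :=
  (coefA a <> 0 /\ (0 < coefB a \/ 0 < coefX a x)) \/ (coefA a = 0 /\ coefX a x < 0).

Section LevelCurves.
Variable a : R.
Hypothesis Ha : -1 <= a <= 1.

Lemma coef_nonneg : 0 <= coefA a /\ 0 <= coefB a /\ coefA a + coefB a = 1.
Proof. unfold coefA, coefB. lra. Qed.

Lemma level_disc_pos x t : admissible a x -> coefA a <> 0 -> 0 < level_disc a x t.
Proof.
  intros Hv HA0. pose proof coef_nonneg as [HA [HB _]].
  assert (Hs : 0 < 1 + t ^ 2) by nra. unfold level_disc.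
  destruct Hv as [[_ [Hv | Hv]] | [Hv _]]; [| | contradiction].
  - assert (0 < 4 * coefA a * coefB a / (1 + t ^ 2)) by (apply Rdiv_lt_0_compat; [nra | lra]). nra.
  - assert (0 <= 4 * coefA a * coefB a / (1 + t ^ 2)) by (apply Rdiv_le_0_compat; [nra | lra]). nra.
Qed.

Lemma level_root_spec x t : admissible a x -> 0 < level_root a x t /\ level_eq a x (level_root a x t) t.
Proof.
  intros Hv. pose proof coef_nonneg as [HA [HB HAB]].
  assert (Hs : 0 < 1 + t ^ 2) by nra.
  unfold level_root, level_eq. destruct (Req_EM_T (coefA a) 0) as [E | E].
  - destruct Hv as [[Hv _] | [_ Hv]]; [contradiction |].
    replace (coefB a) with 1 by lra. rewrite E. split.
    + replace (-1 / (coefX a x * (1 + t ^ 2))) with (/ (- coefX a x * (1 + t ^ 2)))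
        by (field; split; lra).
      apply Rinv_0_lt_compat. nra.
    + field. split; lra.
  - pose proof (level_disc_pos x t Hv E) as HD.
    set (S := sqrt (level_disc a x t)).
    assert (HS : S * S = level_disc a x t) by (apply sqrt_sqrt; lra).
    assert (HS0 : 0 <= S) by apply sqrt_pos.
    split.
    + apply Rdiv_lt_0_compat; [| lra].
      destruct Hv as [[_ [Hv | Hv]] | [Hv _]]; [| nra | contradiction].
      assert (0 < 4 * coefA a * coefB a / (1 + t ^ 2)) by (apply Rdiv_lt_0_compat; [nra | lra]).
      unfold level_disc in HS. nra.
    + replace (coefA a * ((coefX a x + S) / (2 * coefA a)) ^ 2
               - coefX a x * ((coefX a x + S) / (2 * coefA a)) - coefB a / (1 + t ^ 2))
        with ((S * S - level_disc a x t) / (4 * coefA a)) by (unfold level_disc; field; lra).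
      rewrite HS. unfold Rdiv. ring.
Qed.

Lemma level_root_unique x p t : 0 < p -> level_eq a x p t -> admissible a x /\ p = level_root a x t.
Proof.
  intros Hp HR. pose proof coef_nonneg as [HA [HB HAB]].
  assert (Hs : 0 < 1 + t ^ 2) by nra.
  assert (HBs : 0 <= coefB a / (1 + t ^ 2)) by (apply Rdiv_le_0_compat; lra).
  unfold level_eq in HR.
  assert (Hv : admissible a x).
  { unfold admissible. destruct (Req_EM_T (coefA a) 0) as [E | E].
    - right. split; auto. rewrite E in HR.
      assert (0 < coefB a / (1 + t ^ 2)) by (apply Rdiv_lt_0_compat; lra). nra.
    - left. split; auto.
      destruct (Rlt_or_le 0 (coefB a)) as [H | H]; [left; auto | right].
      replace (coefB a) with 0 in HR by lra. unfold Rdiv in HR. rewrite Rmult_0_l in HR. nra. }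
  split; auto.
  destruct (level_root_spec x t Hv) as [Hq HRq]. set (q := level_root a x t) in *.
  unfold level_eq in HRq.
  (* two positive roots p, q of the same quadratic satisfy  A(p + q) = X *)
  assert (E : (p - q) * (coefA a * (p + q) - coefX a x) = 0) by nra.
  apply Rmult_integral in E. destruct E as [E | E]; [lra | exfalso].
  assert (HX : coefX a x = coefA a * (p + q)) by lra. rewrite HX in HR.
  assert (Hpq : 0 < p * q) by (apply Rmult_lt_0_compat; lra).
  assert (HA0 : coefA a = 0) by nra.
  rewrite HA0 in HR. replace (coefB a) with 1 in HR by lra.
  assert (0 < 1 / (1 + t ^ 2)) by (apply Rdiv_lt_0_compat; lra). nra.
Qed.

Lemma level_eq_iff_re x p t : 0 < p ->
  (fst (shear_target a (cayley (p, p * t))) = x <-> level_eq a x p t).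
Proof.
  intros Hp. assert (Hs : 0 < 1 + t ^ 2) by nra.
  rewrite shear_target_cayley by auto. cbn [fst]. unfold level_eq, coefA, coefB, coefX.
  replace (((1 - a) / 2 * p - (1 + a) / 2 * p / (p ^ 2 + (p * t) ^ 2) + a) / 2)
    with (((1 - a) / 2 * p ^ 2 - (1 + a) / 2 / (1 + t ^ 2) + a * p) / (2 * p)) by (field; split; nra).
  assert (Hcancel : forall u, 2 * p * (u / (2 * p)) = u) by (intro; field; lra).
  split; intro H.
  - apply (f_equal (fun u => 2 * p * u)) in H. rewrite Hcancel in H. lra.
  - apply (Rmult_eq_reg_l (2 * p)); [| lra]. rewrite Hcancel. lra.
Qed.

Lemma im_shear_target_cayley p t : 0 < p ->
  snd (shear_target a (cayley (p, p * t)))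
  = (coefA a * p * t + coefB a * t / (p * (1 + t ^ 2))) / 2.
Proof.
  intros Hp. assert (Hs : 0 < 1 + t ^ 2) by nra.
  rewrite shear_target_cayley by auto. cbn [snd]. unfold coefA, coefB. field. split; nra.
Qed.

Lemma admissible_open x0 : admissible a x0 ->
  exists eta, 0 < eta /\ forall x, Rabs (x - x0) < eta -> admissible a x.
Proof.
  unfold admissible, coefX. intros [[HA [HB | HX]] | [HA HX]].
  - exists 1. split; [lra |]. intros. left. auto.
  - exists ((2 * x0 - a) / 2). split; [lra |]. intros x Hx. left. split; auto. right.
    apply Rabs_def2 in Hx. lra.
  - exists (- (2 * x0 - a) / 2). split; [lra |]. intros x Hx. right. split; auto.
    apply Rabs_def2 in Hx. lra.
Qed.

End LevelCurves.

(** Transfer of the sense of rotation: if |b| < |a|, and  Re(a v + b v) = 0 < Im(a v + b v),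
    then  Im(a v - b v) > 0.  With a = h', b = g' and v the velocity of a level curve this
    says that Im f increases along the curve. *)
Lemma dilatation_im_positive (la lb v : Cplx) :
  la <> C0 -> Cnorm (Cdiv lb la) < 1 ->
  fst (Cmul la v) + fst (Cmul lb v) = 0 ->
  0 < snd (Cmul la v) + snd (Cmul lb v) ->
  0 < snd (Cmul la v) - snd (Cmul lb v).
Proof.
  intros Hla Hdiv Hre Him.
  assert (Hna : 0 < Cnorm la) by (apply Cmod_gt_0; exact Hla).
  assert (Hb : Cnorm lb < Cnorm la).
  { assert (E : Cnorm (Cdiv lb la) = Cnorm lb / Cnorm la) by exact (Cmod_div lb la Hla).
    rewrite E in Hdiv. apply Rlt_div_l in Hdiv; lra. }
  assert (Hv : v <> C0) by (intro E; subst v; unfold Cmul, C0 in Him; simpl in Him; lra).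
  assert (Hnv : 0 < Cnorm v) by (apply Cmod_gt_0; exact Hv).
  assert (Hlt : Cnorm (Cmul lb v) ^ 2 < Cnorm (Cmul la v) ^ 2).
  { rewrite !Cnorm_mul. pose proof (Cnorm_ge0 lb).
    assert (Cnorm lb * Cnorm v < Cnorm la * Cnorm v) by (apply Rmult_lt_compat_r; auto).
    assert (0 <= Cnorm lb * Cnorm v) by (apply Rmult_le_pos; lra). nra. }
  rewrite !Cnorm_sqr in Hlt. nra.
Qed.

(** Along a level curve, with p' = dp/dτ obtained by differentiating the level equation,
    the τ-derivative of  A p τ + B τ/(p(1+τ²))  (twice Im φ_a on the curve) is positive:
    it equals  ((A p²s + B)² + τ²(A p²s - B)²) / (p s² (A p²s + B))  with s = 1 + τ². *)
Lemma level_tangent_im_positive A B X p t p' : 0 <= A -> 0 <= B -> A + B = 1 -> 0 < p ->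
  A * p ^ 2 - X * p - B / (1 + t ^ 2) = 0 ->
  2 * A * p * p' - X * p' + 2 * B * t / (1 + t ^ 2) ^ 2 = 0 ->
  0 < A * (p' * t + p) + B * (p * (1 + t ^ 2) - t * (p' * (1 + t ^ 2) + 2 * t * p)) / (p * (1 + t ^ 2)) ^ 2.
Proof.
  intros HA HB HAB Hp R0 R1.
  set (s := 1 + t ^ 2) in *. assert (Hs : 0 < s) by (unfold s; nra).
  set (K := A * p ^ 2 * s + B).
  assert (HK : 0 < K).
  { unfold K. assert (0 <= A * p ^ 2 * s) by (apply Rmult_le_pos; [nra | lra]).
    destruct (Rlt_or_le 0 A); [|nra].
    assert (0 < A * p ^ 2 * s) by (apply Rmult_lt_0_compat; [apply Rmult_lt_0_compat; nra | lra]). lra. }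
  assert (HX : X = A * p - B / (p * s)).
  { apply (Rmult_eq_reg_r p); [| lra].
    replace ((A * p - B / (p * s)) * p) with (A * p ^ 2 - B / s) by (field; lra). lra. }
  assert (Hp' : p' = - 2 * B * t * p / (s * K)).
  { rewrite HX in R1. apply (Rmult_eq_reg_r (K / (p * s))).
    2: { apply Rgt_not_eq, Rdiv_lt_0_compat; nra. }
    replace (- 2 * B * t * p / (s * K) * (K / (p * s))) with (- 2 * B * t / s ^ 2)
      by (field; repeat split; lra).
    replace (p' * (K / (p * s))) with (2 * A * p * p' - (A * p - B / (p * s)) * p')
      by (unfold K; field; lra).
    lra. }
  rewrite Hp'.
  set (al := A * p ^ 2 * s).
  replace (A * (- 2 * B * t * p / (s * K) * t + p)
           + B * (p * s - t * (- 2 * B * t * p / (s * K) * s + 2 * t * p)) / (p * s) ^ 2)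
    with (((al + B) ^ 2 + t ^ 2 * (al - B) ^ 2) / (p * s ^ 2 * K))
    by (unfold al, K, s; field; split; [| split]; [change (K <> 0); lra | change (s <> 0); lra | lra]).
  apply Rdiv_lt_0_compat.
  - assert (0 < al + B) by (change (0 < K); lra).
    apply Rplus_lt_le_0_compat; [apply pow_lt; lra | apply Rmult_le_pos; apply pow2_ge_0].
  - apply Rmult_lt_0_compat; [apply Rmult_lt_0_compat; nra | lra].
Qed.

(** [level_curve a x] is  τ ↦ cayley(p, pτ)  with  p = level_root a x τ, written in explicit
    coordinates so that it can be differentiated componentwise. *)

Definition curve_re (a x t : R) : R := cayley_re (level_root a x t) (level_root a x t * t).
Definition curve_im (a x t : R) : R := cayley_im (level_root a x t) (level_root a x t * t).
Definition level_curve (a x t : R) : Cplx := (curve_re a x t, curve_im a x t).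
Definition curve_velocity (a x t : R) : Cplx := (Derive (curve_re a x) t, Derive (curve_im a x) t).

Lemma derivable_pt_lim_Derive (F : R -> R) x : ex_derive F x -> derivable_pt_lim F x (Derive F x).
Proof. intros H. apply is_derive_Reals, Derive_correct, H. Qed.

Section LevelCurveCalculus.
Variable a : R.
Hypothesis Ha : -1 <= a <= 1.

Lemma level_curve_cayley x t : admissible a x ->
  level_curve a x t = cayley (level_root a x t, level_root a x t * t).
Proof.
  intros Hv. destruct (level_root_spec a Ha x t Hv) as [Hp _].
  symmetry. apply cayley_explicit, Hp.
Qed.

Lemma level_curve_inE x t : admissible a x -> inE (level_curve a x t).
Proof.
  intros Hv. rewrite level_curve_cayley by auto.
  apply cayley_inE, (level_root_spec a Ha x t Hv).
Qed.

Lemma shear_re_on_curve x t : admissible a x -> fst (shear_target a (level_curve a x t)) = x.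
Proof.
  intros Hv. destruct (level_root_spec a Ha x t Hv) as [Hp HR].
  rewrite level_curve_cayley by auto. apply level_eq_iff_re; auto.
Qed.

Lemma shear_im_on_curve x t : admissible a x ->
  snd (shear_target a (level_curve a x t))
  = (coefA a * level_root a x t * t + coefB a * t / (level_root a x t * (1 + t ^ 2))) / 2.
Proof.
  intros Hv. destruct (level_root_spec a Ha x t Hv) as [Hp _].
  rewrite level_curve_cayley by auto. apply im_shear_target_cayley; auto.
Qed.

Lemma on_level_curve z : inE z ->
  admissible a (fst (shear_target a z)) /\
  exists t, z = level_curve a (fst (shear_target a z)) t.
Proof.
  intros Hz. destruct (cayley_inv_spec z Hz) as [HP HM].
  set (P := fst (cayley_inv z)) in *. set (t := snd (cayley_inv z) / P).
  assert (EW : cayley_inv z = (P, P * t)).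
  { apply injective_projections; cbn [fst snd]; [reflexivity |]. unfold t. field. lra. }
  rewrite EW in HM.
  assert (Hre : fst (shear_target a (cayley (P, P * t))) = fst (shear_target a z)) by (rewrite HM; auto).
  apply level_eq_iff_re in Hre; [| lra].
  destruct (level_root_unique a Ha _ _ _ HP Hre) as [Hv EP].
  split; auto. exists t. rewrite level_curve_cayley, <- EP by auto. symmetry. exact HM.
Qed.

Lemma level_root_derivable_t x t : admissible a x -> ex_derive (level_root a x) t.
Proof.
  intros Hv. pose proof (coef_nonneg a Ha) as [HA [HB HAB]].
  unfold level_root. destruct (Req_EM_T (coefA a) 0) as [E | E].
  - destruct Hv as [[Hv _] | [_ Hv]]; [contradiction |].
    auto_derive. assert (0 < 1 + t * (t * 1)) by nra.
    apply Rmult_integral_contrapositive. split; lra.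
  - pose proof (level_disc_pos a Ha x t Hv E) as HD. unfold level_disc in *.
    auto_derive. split; [nra | split; [| exact I]]. unfold Rdiv in HD; simpl in HD; exact HD.
Qed.

Lemma level_root_derivable_x x t : admissible a x -> ex_derive (fun x => level_root a x t) x.
Proof.
  intros Hv. pose proof (coef_nonneg a Ha) as [HA [HB HAB]].
  unfold level_root. destruct (Req_EM_T (coefA a) 0) as [E | E].
  - destruct Hv as [[Hv _] | [_ Hv]]; [contradiction |].
    unfold coefX in *. auto_derive. assert (0 < 1 + t * (t * 1)) by nra.
    apply Rmult_integral_contrapositive. split; lra.
  - pose proof (level_disc_pos a Ha x t Hv E) as HD. unfold level_disc, coefX in *.
    auto_derive. unfold Rminus in HD. simpl in HD. exact HD.
Qed.

Lemma curve_derivable_t x t : admissible a x ->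
  ex_derive (curve_re a x) t /\ ex_derive (curve_im a x) t.
Proof.
  intros Hv. pose proof (level_root_derivable_t x t Hv).
  destruct (level_root_spec a Ha x t Hv) as [Hp _].
  unfold curve_re, curve_im, cayley_re, cayley_im.
  split; auto_derive; repeat split; try assumption; nra.
Qed.

Lemma curve_derivable_x x t : admissible a x ->
  ex_derive (fun x => curve_re a x t) x /\ ex_derive (fun x => curve_im a x t) x.
Proof.
  intros Hv. pose proof (level_root_derivable_x x t Hv).
  destruct (level_root_spec a Ha x t Hv) as [Hp _].
  unfold curve_re, curve_im, cayley_re, cayley_im.
  split; auto_derive; repeat split; try assumption; nra.
Qed.

Lemma level_root_derivative_eq x t : admissible a x ->
  let p := level_root a x t in let p' := Derive (level_root a x) t in
  2 * coefA a * p * p' - coefX a x * p' + 2 * coefB a * t / (1 + t ^ 2) ^ 2 = 0.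
Proof.
  intros Hv p p'.
  pose proof (level_root_derivable_t x t Hv) as Hd.
  assert (Hder : derivable_pt_lim
      (fun u => coefA a * level_root a x u ^ 2 - coefX a x * level_root a x u - coefB a / (1 + u ^ 2)) t
      (2 * coefA a * p * p' - coefX a x * p' + 2 * coefB a * t / (1 + t ^ 2) ^ 2)).
  { apply is_derive_Reals. auto_derive; [repeat split; auto; nra |].
    replace (Derive (fun u => level_root a x u) t) with p' by reflexivity.
    unfold p. field. nra. }
  assert (Hconst : (fun u => coefA a * level_root a x u ^ 2 - coefX a x * level_root a x u
                             - coefB a / (1 + u ^ 2)) = fun _ => 0).
  { apply functional_extensionality. intro u. apply (level_root_spec a Ha x u Hv). }
  rewrite Hconst in Hder. eapply uniqueness_limite; [exact Hder | apply derivable_pt_lim_const].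
Qed.

Lemma level_curve_tangent (s : Cplx -> Cplx) x t l :
  admissible a x -> (forall z, inE z -> s z = shear_target a z) ->
  cderiv_at s (level_curve a x t) l ->
  fst (Cmul l (curve_velocity a x t)) = 0 /\ 0 < snd (Cmul l (curve_velocity a x t)).
Proof.
  intros Hv Hs Hl. pose proof (coef_nonneg a Ha) as [HA [HB HAB]].
  destruct (curve_derivable_t x t Hv) as [D1 D2].
  apply derivable_pt_lim_Derive in D1. apply derivable_pt_lim_Derive in D2.
  assert (Hon : forall u, s (curve_re a x u, curve_im a x u) = shear_target a (level_curve a x u))
    by (intro u; apply Hs, level_curve_inE, Hv).
  split.
  - (* Re s is constantly x along the curve *)
    pose proof (re_along_curve s _ _ t l _ _ Hl D1 D2) as Hre.
    assert (Hconst : (fun u => fst (s (curve_re a x u, curve_im a x u))) = fun _ => x).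
    { apply functional_extensionality. intro u. rewrite Hon. apply shear_re_on_curve, Hv. }
    rewrite Hconst in Hre. eapply uniqueness_limite; [exact Hre | apply derivable_pt_lim_const].
  - (* Im s along the curve is the explicit function of [shear_im_on_curve] *)
    pose proof (im_along_curve s _ _ t l _ _ Hl D1 D2) as Him.
    set (p := level_root a x t). set (p' := Derive (level_root a x) t).
    destruct (level_root_spec a Ha x t Hv) as [Hp HR].
    pose proof (level_root_derivable_t x t Hv) as Hpd.
    assert (Hexpl : (fun u => snd (s (curve_re a x u, curve_im a x u)))
        = fun u => (coefA a * level_root a x u * u
                    + coefB a * u / (level_root a x u * (1 + u ^ 2))) / 2).
    { apply functional_extensionality. intro u. rewrite Hon. apply shear_im_on_curve, Hv. }
    rewrite Hexpl in Him.
    replace (snd (Cmul l (curve_velocity a x t)))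
      with ((coefA a * (p' * t + p) + coefB a * (p * (1 + t ^ 2) - t * (p' * (1 + t ^ 2) + 2 * t * p))
             / (p * (1 + t ^ 2)) ^ 2) / 2).
    + apply Rdiv_lt_0_compat; [| lra].
      apply (level_tangent_im_positive _ _ (coefX a x)); auto.
      apply (level_root_derivative_eq x t Hv).
    + eapply uniqueness_limite; [| exact Him].
      apply is_derive_Reals. auto_derive.
      * repeat split; auto. apply Rmult_integral_contrapositive; split; nra.
      * replace (Derive (fun u => level_root a x u) t) with p' by reflexivity.
        unfold p. field. split; nra.
Qed.

End LevelCurveCalculus.

Lemma continuity_pt_eps f x0 : continuity_pt f x0 ->
  forall eps, 0 < eps -> exists d, 0 < d /\ forall x, Rabs (x - x0) < d -> Rabs (f x - f x0) < eps.
Proof.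
  intros H eps He. destruct (H eps He) as [d [Hd P]]. exists d. split; auto.
  intros x Hx. destruct (Req_dec x x0) as [E | E].
  - subst. rewrite Rminus_diag, Rabs_R0. lra.
  - apply P. split; [split; [exact I | auto] | exact Hx].
Qed.

Lemma positive_derivative_increasing (F : R -> R) :
  (forall t, exists D, 0 < D /\ derivable_pt_lim F t D) ->
  forall t1 t2, t1 < t2 -> F t1 < F t2.
Proof.
  intros H t1 t2 Ht.
  assert (HD : forall c, derivable_pt_lim F c (Derive F c) /\ 0 < Derive F c).
  { intro c. destruct (H c) as [D [HD P]].
    replace (Derive F c) with D by (symmetry; apply is_derive_unique, is_derive_Reals, P).
    auto. }
  destruct (MVT_cor2 F (Derive F) t1 t2 Ht) as [c [E Hc]]; [intros c _; apply HD |].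
  pose proof (proj2 (HD c)). nra.
Qed.

Lemma open_path_nbhd (gam : R -> Cplx) (U : Cplx -> Prop) M :
  open_set U ->
  (forall eps, 0 < eps -> exists d, 0 < d /\
     forall m, Rabs (m - M) < d -> Cnorm (Csub (gam m) (gam M)) < eps) ->
  U (gam M) -> exists d, 0 < d /\ forall m, Rabs (m - M) < d -> U (gam m).
Proof.
  intros HU Hc HM. destruct (HU _ HM) as [r [Hr Pr]].
  destruct (Hc r Hr) as [d [Hd Pd]]. exists d. split; auto.
Qed.

(** Proof: take the supremum M of the initial segments
    mapped into U; γ(M) can be in neither U \ V nor V \ U. *)
Lemma path_not_separated (gam : R -> Cplx) (U V : Cplx -> Prop) :
  open_set U -> open_set V ->
  (forall l, 0 <= l <= 1 -> forall eps, 0 < eps -> exists d, 0 < d /\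
      forall m, Rabs (m - l) < d -> Cnorm (Csub (gam m) (gam l)) < eps) ->
  (forall l, 0 <= l <= 1 -> U (gam l) \/ V (gam l)) ->
  U (gam 0) -> V (gam 1) -> exists l, 0 <= l <= 1 /\ U (gam l) /\ V (gam l).
Proof.
  intros HU HV Hc Hcov H0 H1. apply NNPP. intro Hno.
  assert (Hdisj : forall l, 0 <= l <= 1 -> U (gam l) -> V (gam l) -> False)
    by (intros l Hl Hu Hv; apply Hno; exists l; auto).
  set (S := fun l => 0 <= l <= 1 /\ forall m, 0 <= m <= l -> U (gam m)).
  assert (HS0 : S 0) by (split; [lra | intros m Hm; replace m with 0 by lra; auto]).
  destruct (completeness S) as [M [HM1 HM2]].
  { exists 1. intros l [Hl _]. lra. }
  { exists 0. exact HS0. }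
  assert (HM : 0 <= M <= 1) by (split; [apply HM1, HS0 | apply HM2; intros l [Hl _]; lra]).
  assert (Hbelow : forall m, 0 <= m < M -> U (gam m)).
  { intros m Hm. apply NNPP. intro Hn.
    assert (M <= m); [| lra].
    apply HM2. intros l [Hl Hl2]. destruct (Rle_or_lt l m) as [Hle | Hlt]; auto.
    exfalso. apply Hn, Hl2. lra. }
  destruct (classic (U (gam M))) as [HuM | HuM].
  - (* then M = 1, or U would contain the image of a longer initial segment *)
    destruct (open_path_nbhd gam U M HU (Hc M HM) HuM) as [d [Hd Pd]].
    destruct (Req_dec M 1) as [E | E]; [subst; apply (Hdisj 1); auto; lra |].
    set (M' := Rmin (M + d / 2) 1).
    assert (HM' : M < M') by (apply Rmin_glb_lt; lra).
    assert (HSM' : S M').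
    { assert (M' <= M + d / 2) by apply Rmin_l. assert (M' <= 1) by apply Rmin_r.
      split; [lra |]. intros m Hm. destruct (Rlt_or_le m M) as [Hl | Hl]; [apply Hbelow; lra |].
      apply Pd. rewrite Rabs_right; lra. }
    pose proof (HM1 _ HSM'). lra.
  - (* then γ(M) ∈ V, and V also contains γ(m) for some m < M *)
    assert (HvM : V (gam M)) by (destruct (Hcov M HM); auto; contradiction).
    destruct (open_path_nbhd gam V M HV (Hc M HM) HvM) as [d [Hd Pd]].
    destruct (Req_dec M 0) as [E | E]; [subst; contradiction |].
    set (m := Rmax (M - d / 2) 0).
    assert (M - d / 2 <= m) by apply Rmax_l. assert (0 <= m) by apply Rmax_r.
    assert (Hm : 0 <= m < M) by (split; [lra | apply Rmax_lub_lt; lra]).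
    apply (Hdisj m); [lra | apply Hbelow; auto |].
    apply Pd. rewrite Rabs_left1; lra.
Qed.

(** ** The shear argument *)

Section Shear.
Variable a : R.
Hypothesis Ha : -1 <= a <= 1.
Variables h g : Cplx -> Cplx.
Hypothesis Hsum : forall z, inE z -> Cadd (h z) (g z) = shear_target a z.
Hypothesis Hh : analytic_on_E h.
Hypothesis Hg : analytic_on_E g.
Hypothesis Hlu : loc_univ_sense_pres h g.

Lemma harm_re z : inE z -> fst (harm h g z) = fst (shear_target a z).
Proof. intros Hz. rewrite <- Hsum by auto. reflexivity. Qed.

Lemma harm_re_on_curve x t : admissible a x -> fst (harm h g (level_curve a x t)) = x.
Proof.
  intros Hv. rewrite harm_re by (apply level_curve_inE; auto). apply shear_re_on_curve; auto.
Qed.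

Lemma on_harm_level_curve z : inE z ->
  admissible a (fst (harm h g z)) /\ exists t, z = level_curve a (fst (harm h g z)) t.
Proof. intros Hz. rewrite harm_re by auto. apply on_level_curve; auto. Qed.

(** The heart of the proof: d/dτ Im f(γ_x(τ)) = Im(h'γ') - Im(g'γ') > 0. *)
Lemma harm_im_derivative_pos x t : admissible a x -> exists D, 0 < D /\
  derivable_pt_lim (fun t => snd (harm h g (level_curve a x t))) t D.
Proof.
  intros Hv. assert (Hz : inE (level_curve a x t)) by (apply level_curve_inE; auto).
  destruct (Hh _ Hz) as [lh Hlh]. destruct (Hg _ Hz) as [lg Hlg].
  destruct (Hlu _ Hz lh lg Hlh Hlg) as [Hne Hdil].
  destruct (curve_derivable_t a Ha x t Hv) as [D1 D2].
  apply derivable_pt_lim_Derive in D1. apply derivable_pt_lim_Derive in D2.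
  destruct (level_curve_tangent a Ha (fun w => Cadd (h w) (g w)) x t (Cadd lh lg) Hv Hsum
              (cderiv_add h g _ lh lg Hlh Hlg)) as [Hre Him].
  set (v := curve_velocity a x t) in *.
  assert (Hre' : fst (Cmul lh v) + fst (Cmul lg v) = 0) by (rewrite <- Hre; unfold Cmul, Cadd; simpl; ring).
  assert (Him' : 0 < snd (Cmul lh v) + snd (Cmul lg v)) by (unfold Cmul, Cadd in *; simpl in *; lra).
  exists (snd (Cmul lh v) - snd (Cmul lg v)). split.
  - apply dilatation_im_positive; auto.
  - exact (harm_im_along_curve h g _ _ t lh lg _ _ Hlh Hlg D1 D2).
Qed.

Lemma harm_im_increasing x t1 t2 : admissible a x -> t1 < t2 ->
  snd (harm h g (level_curve a x t1)) < snd (harm h g (level_curve a x t2)).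
Proof.
  intros Hv. apply (positive_derivative_increasing (fun t => snd (harm h g (level_curve a x t)))).
  intro t. apply harm_im_derivative_pos; auto.
Qed.

Lemma harm_im_ivt x t1 t2 y : admissible a x -> t1 <= t2 ->
  snd (harm h g (level_curve a x t1)) <= y <= snd (harm h g (level_curve a x t2)) ->
  exists t, harm h g (level_curve a x t) = (x, y).
Proof.
  intros Hv Ht Hy.
  assert (Hcont : continuity (fun t => snd (harm h g (level_curve a x t)) - y)).
  { intro t. apply continuity_pt_minus; [| apply continuity_pt_const; intros ? ?; reflexivity].
    destruct (harm_im_derivative_pos x t Hv) as [D [_ HD]].
    apply derivable_continuous_pt. exists D. exact HD. }
  destruct (IVT_cor _ t1 t2 Hcont Ht) as [t [_ Et]]; [cbv beta; nra |].
  exists t. apply injective_projections; cbn [fst snd];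
    [apply harm_re_on_curve; auto | cbv beta in Et; lra].
Qed.

Lemma harm_im_continuous_in_level x0 t : admissible a x0 ->
  continuity_pt (fun x => snd (harm h g (level_curve a x t))) x0.
Proof.
  intros Hv. assert (Hz : inE (level_curve a x0 t)) by (apply level_curve_inE; auto).
  destruct (Hh _ Hz) as [lh Hlh]. destruct (Hg _ Hz) as [lg Hlg].
  destruct (curve_derivable_x a Ha x0 t Hv) as [D1 D2].
  apply derivable_pt_lim_Derive in D1. apply derivable_pt_lim_Derive in D2.
  apply derivable_continuous_pt. eexists.
  exact (harm_im_along_curve h g (fun x => curve_re a x t) (fun x => curve_im a x t) x0 lh lg
           _ _ Hlh Hlg D1 D2).
Qed.

(** Univalence: equal values lie on one level curve, where Im f is injective. *)
Lemma harm_injective z1 z2 : inE z1 -> inE z2 -> harm h g z1 = harm h g z2 -> z1 = z2.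
Proof.
  intros H1 H2 E.
  destruct (on_harm_level_curve z1 H1) as [Hv [t1 E1]].
  destruct (on_harm_level_curve z2 H2) as [_ [t2 E2]].
  rewrite <- E in E2. set (x := fst (harm h g z1)) in *.
  assert (Him : snd (harm h g (level_curve a x t1)) = snd (harm h g (level_curve a x t2)))
    by (rewrite <- E1, <- E2, E; reflexivity).
  rewrite E1, E2. f_equal.
  destruct (Rtotal_order t1 t2) as [L | [L | L]]; auto; exfalso;
    [pose proof (harm_im_increasing x t1 t2 Hv L) | pose proof (harm_im_increasing x t2 t1 Hv L)]; lra.
Qed.

(** Convexity in the direction of the imaginary axis: a vertical segment between two
    image points lies on one level curve, and the intermediate value theorem applies. *)
Lemma image_convex_imag : convex_imag_dir (imageE (harm h g)).
Proof.
  intros x y1 y2 y [z1 [H1 E1]] [z2 [H2 E2]] L1 L2.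
  destruct (on_harm_level_curve z1 H1) as [Hv [t1 F1]].
  destruct (on_harm_level_curve z2 H2) as [_ [t2 F2]].
  rewrite E1 in Hv, F1. rewrite E2 in F2. simpl in Hv, F1, F2.
  assert (S1 : snd (harm h g (level_curve a x t1)) = y1) by (rewrite <- F1, E1; reflexivity).
  assert (S2 : snd (harm h g (level_curve a x t2)) = y2) by (rewrite <- F2, E2; reflexivity).
  destruct (Rle_or_lt t1 t2) as [L | L].
  - destruct (harm_im_ivt x t1 t2 y Hv L) as [t Et]; [lra |].
    exists (level_curve a x t). split; [apply level_curve_inE; auto | exact Et].
  - pose proof (harm_im_increasing x t2 t1 Hv L). lra.
Qed.

(** The image is open: around f(γ_{x0}(τ0)) = (x0, y0), the heights of f(γ_x(τ0 ∓ 1))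
    stay below and above y0 for x near x0, so the intermediate value theorem reaches
    every nearby point. *)
Lemma image_open : open_set (imageE (harm h g)).
Proof.
  intros w [z0 [Hz0 E0]].
  destruct (on_harm_level_curve z0 Hz0) as [Hv [t0 F0]].
  rewrite E0 in Hv, F0. set (x0 := fst w) in *. set (y0 := snd w).
  set (K := fun x t => snd (harm h g (level_curve a x t))).
  assert (Ky : K x0 t0 = y0) by (unfold K, y0; rewrite <- F0, E0; reflexivity).
  assert (Klo : K x0 (t0 - 1) < y0) by (rewrite <- Ky; apply harm_im_increasing; auto; lra).
  assert (Khi : y0 < K x0 (t0 + 1)) by (rewrite <- Ky; apply harm_im_increasing; auto; lra).
  set (eps := Rmin (y0 - K x0 (t0 - 1)) (K x0 (t0 + 1) - y0) / 2).
  assert (Heps : 0 < eps) by (apply Rmult_lt_0_compat; [apply Rmin_pos | ]; lra).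
  assert (Heps1 : 2 * eps <= y0 - K x0 (t0 - 1)) by (unfold eps; pose proof (Rmin_l (y0 - K x0 (t0 - 1)) (K x0 (t0 + 1) - y0)); lra).
  assert (Heps2 : 2 * eps <= K x0 (t0 + 1) - y0) by (unfold eps; pose proof (Rmin_r (y0 - K x0 (t0 - 1)) (K x0 (t0 + 1) - y0)); lra).
  destruct (continuity_pt_eps _ _ (harm_im_continuous_in_level x0 (t0 - 1) Hv) eps Heps)
    as [d1 [Hd1 P1]].
  destruct (continuity_pt_eps _ _ (harm_im_continuous_in_level x0 (t0 + 1) Hv) eps Heps)
    as [d2 [Hd2 P2]].
  destruct (admissible_open a x0 Hv) as [eta [Heta Pv]].
  set (r := Rmin (Rmin eps d1) (Rmin d2 eta)).
  assert (Hr : r <= eps /\ r <= d1 /\ r <= d2 /\ r <= eta).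
  { unfold r. pose proof (Rmin_l (Rmin eps d1) (Rmin d2 eta)). pose proof (Rmin_r (Rmin eps d1) (Rmin d2 eta)).
    pose proof (Rmin_l eps d1). pose proof (Rmin_r eps d1). pose proof (Rmin_l d2 eta). pose proof (Rmin_r d2 eta).
    lra. }
  exists r. split; [apply Rmin_pos; apply Rmin_pos; auto |].
  intros v Hvw.
  assert (Hx : Rabs (fst v - x0) < r) by exact (Rle_lt_trans _ _ _ (Rabs_fst_le_Cnorm _) Hvw).
  assert (Hy : Rabs (snd v - y0) < r) by exact (Rle_lt_trans _ _ _ (Rabs_snd_le_Cnorm _) Hvw).
  assert (Hvx : admissible a (fst v)) by (apply Pv; lra).
  specialize (P1 (fst v) ltac:(lra)). specialize (P2 (fst v) ltac:(lra)).
  apply Rabs_def2 in P1. apply Rabs_def2 in P2. apply Rabs_def2 in Hy.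
  destruct (harm_im_ivt (fst v) (t0 - 1) (t0 + 1) (snd v) Hvx ltac:(lra)) as [t Et].
  { unfold K in *. cbv beta in *. lra. }
  exists (level_curve a (fst v) t). split; [apply level_curve_inE; auto |].
  rewrite Et. destruct v; reflexivity.
Qed.

End Shear.

(** ** Connectedness of the image *)

Lemma radial_path_continuous h g z : analytic_on_E h -> analytic_on_E g -> inE z ->
  forall l, 0 <= l <= 1 -> forall eps, 0 < eps -> exists d, 0 < d /\
    forall m, Rabs (m - l) < d ->
      Cnorm (Csub (harm h g (Cmul (RtoC m) z)) (harm h g (Cmul (RtoC l) z))) < eps.
Proof.
  intros Hh Hg Hz l Hl eps He.
  destruct (harm_continuous h g Hh Hg _ (inE_scale l z Hl Hz) eps He) as [d [Hd P]].
  pose proof (Cnorm_ge0 z).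
  exists (d / (Cnorm z + 1)). split; [apply Rdiv_lt_0_compat; lra |].
  intros m Hm. apply P.
  replace (Csub (Cmul (RtoC m) z) (Cmul (RtoC l) z)) with (Cmul (RtoC (m - l)) z) by cplx_ring.
  rewrite Cnorm_mul, Cnorm_RtoC.
  apply Rle_lt_trans with (Rabs (m - l) * (Cnorm z + 1)); [apply Rmult_le_compat_l; [apply Rabs_pos | lra] |].
  apply (Rmult_lt_reg_r (/ (Cnorm z + 1))); [apply Rinv_0_lt_compat; lra |].
  rewrite Rmult_assoc, Rinv_r by lra. unfold Rdiv in Hm. lra.
Qed.

(** If open sets U, V cover f(E), with f(0) ∈ U and f(z) ∈ V, they meet on f(E):
    apply [path_not_separated] to the radial segment from 0 to z. *)
Lemma image_meets_via_origin h g (U V : Cplx -> Prop) z :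
  analytic_on_E h -> analytic_on_E g -> open_set U -> open_set V ->
  (forall w, imageE (harm h g) w -> U w \/ V w) ->
  inE z -> U (harm h g (0, 0)) -> V (harm h g z) ->
  exists w, imageE (harm h g) w /\ U w /\ V w.
Proof.
  intros Hh Hg HU HV Hcov Hz H0 Hv.
  assert (Hseg : forall l, 0 <= l <= 1 -> imageE (harm h g) (harm h g (Cmul (RtoC l) z)))
    by (intros l Hl; exists (Cmul (RtoC l) z); split; [apply inE_scale |]; auto).
  destruct (path_not_separated (fun l => harm h g (Cmul (RtoC l) z)) U V HU HV)
    as [l [Hl [Hu Hv']]].
  - intros l Hl. apply radial_path_continuous; auto.
  - intros l Hl. apply Hcov, Hseg, Hl.
  - replace (Cmul (RtoC 0) z) with ((0, 0) : Cplx) by cplx_ring. exact H0.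
  - replace (Cmul (RtoC 1) z) with z by (destruct z; cplx_ring). exact Hv.
  - exists (harm h g (Cmul (RtoC l) z)). auto.
Qed.

(** f(E) is connected, since every point is joined to f(0) by a radial path. *)
Lemma image_connected h g : analytic_on_E h -> analytic_on_E g ->
  connected_set (imageE (harm h g)).
Proof.
  intros Hh Hg U V HU HV Hcov [w1 [[z1 [Hz1 E1]] Hu1]] [w2 [[z2 [Hz2 E2]] Hv2]].
  subst w1 w2.
  destruct (Hcov (harm h g (0, 0))) as [H0 | H0]; [exists (0, 0); split; [apply inE_origin | auto] | |].
  - apply (image_meets_via_origin h g U V z2); auto.
  - destruct (image_meets_via_origin h g V U z1) as [w [Hw [Hv Hu]]]; auto.
    + intros w Hw. destruct (Hcov w Hw); auto.
    + exists w. auto.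
Qed.

(** φ_α is affine in α, so a convex combination of shears of φ_{α1}, φ_{α2} is a shear of
    φ_a with a = tα1 + (1-t)α2. *)
Lemma shear_target_affine t a1 a2 z :
  Cadd (Cmul (RtoC t) (shear_target a1 z)) (Cmul (RtoC (1 - t)) (shear_target a2 z)) =
  shear_target (t * a1 + (1 - t) * a2) z.
Proof.
  unfold shear_target, Cdiv. generalize (Cinv (Csub C1 (Cmul z z))). intros [u v]. destruct z. cplx_ring.
Qed.

Theorem theorem2p1 (alpha1 alpha2 t : R) (h1 g1 h2 g2 : Cplx -> Cplx) :
  -1 <= alpha1 <= 1 -> -1 <= alpha2 <= 1 ->
  in_SH h1 g1 -> in_SH h2 g2 ->
  (forall z, inE z -> Cadd (h1 z) (g1 z) = shear_target alpha1 z) ->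
  (forall z, inE z -> Cadd (h2 z) (g2 z) = shear_target alpha2 z) ->
  0 <= t <= 1 ->
  loc_univ_sense_pres (lincomb t h1 h2) (lincomb t g1 g2) ->
  in_SH (lincomb t h1 h2) (lincomb t g1 g2) /\
  domain (imageE (harm (lincomb t h1 h2) (lincomb t g1 g2))) /\
  convex_imag_dir (imageE (harm (lincomb t h1 h2) (lincomb t g1 g2))).
Proof.
  intros Ha1 Ha2 [Ah1 [Ag1 [_ [_ [Z1 D1]]]]] [Ah2 [Ag2 [_ [_ [Z2 D2]]]]] S1 S2 Ht Hlu.
  set (a := t * alpha1 + (1 - t) * alpha2).
  assert (Ha : -1 <= a <= 1) by (unfold a; nra).
  set (h := lincomb t h1 h2). set (g := lincomb t g1 g2).
  assert (Hsum : forall z, inE z -> Cadd (h z) (g z) = shear_target a z).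
  { intros z Hz. unfold a. rewrite <- shear_target_affine, <- S1, <- S2 by auto.
    unfold h, g, lincomb. cplx_ring. }
  assert (Hh : analytic_on_E h) by (apply lincomb_analytic; auto).
  assert (Hg : analytic_on_E g) by (apply lincomb_analytic; auto).
  assert (Hzero : harm h g C0 = C0).
  { replace (harm h g C0) with
      (Cadd (Cmul (RtoC t) (harm h1 g1 C0)) (Cmul (RtoC (1 - t)) (harm h2 g2 C0)))
      by (unfold h, g, harm, lincomb; cplx_ring).
    rewrite Z1, Z2. cplx_ring. }
  assert (Hnorm : cderiv_at h C0 C1).
  { pose proof (lincomb_cderiv t h1 h2 C0 _ _ D1 D2) as D.
    replace (Cadd (Cmul (RtoC t) C1) (Cmul (RtoC (1 - t)) C1)) with C1 in D by cplx_ring.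
    exact D. }
  split; [| split].
  - split; [exact Hh | split; [exact Hg | split; [| split; [exact Hlu | split; auto]]]].
    exact (harm_injective a Ha h g Hsum Hh Hg Hlu).
  - split; [exact (image_open a Ha h g Hsum Hh Hg Hlu) |].
    split; [exact (image_connected h g Hh Hg) |].
    exists (harm h g (0, 0)), (0, 0). split; [apply inE_origin | reflexivity].
  - exact (image_convex_imag a Ha h g Hsum Hh Hg Hlu).
Qed.
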